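(* Let $\mathbf{V}$ be a finite set of random variables containing a target variable $T$, and let $\mathbf{F} = \mathbf{V} \setminus \{T\}$ be the set of features. Suppose the joint distribution $P$ of $\mathbf{V}$ can be faithfully represented by a directed maximal ancestral graph, and suppose the algorithm PFBP (described in the context) has access to a conditional independence oracle for $P$ and imposes no limit on the number of selected features. Then PFBP with no limit on the number of Runs returns the Markov blanket of $T$.
   Context: Notation: $\mathbf{X} \perp T \mid \mathbf{S}$ denotes conditional independence of $\mathbf{X}$ and $T$ given $\mathbf{S}$ under $P$. A Markov blanket of $T$ with respect to $\mathbf{V}$ is a minimal set $\mathbf{S} \subseteq \mathbf{F}$ such that $(\mathbf{V}\setminus(\mathbf{S}\cup\{T\})) \perp T \mid \mathbf{S}$; for faithful distributions it is unique. A directed maximal ancestral graph (DMAG) is a mixed graph with directed and bi-directed edges (the class of graphs closed under marginalization of Bayesian networks); it entails conditional independencies via m-separation. $P$ can be faithfully represented by a DMAG $G$ if the conditional independencies holding in $P$ are exactly those entailed by m-separation in $G$. The PFBP algorithm with an independence oracle (Parallel Forward-Backward with Pruning, with Early Dropping) operates as follows. Initially the selected set is $\mathbf{S} = \emptyset$. It performs Runs, up to a maximum number maxRuns of Runs, stopping early if a Run leaves $\mathbf{S}$ unchanged. Each Run consists of: (1) set the remaining set $\mathbf{R} = \mathbf{F} \setminus \mathbf{S}$; (2) forward phase: repeat iterations in which every $X \in \mathbf{R}$ with $X \perp T \mid \mathbf{S}$ is removed from $\mathbf{R}$ (Early Dropping), and then, if some $X \in \mathbf{R}$ is conditionally dependent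 on $T$ given $\mathbf{S}$, one such variable (the best-ranked one) is added to $\mathbf{S}$ and removed from $\mathbf{R}$; the forward phase ends when no variable is added; (3) backward phase: repeatedly, if some $X \in \mathbf{S}$ satisfies $X \perp T \mid \mathbf{S}\setminus\{X\}$, remove one such variable from $\mathbf{S}$; stop when no variable can be removed. The output is $\mathbf{S}$. ''No limit on the number of Runs'' means maxRuns $=\infty$, so Runs continue until $\mathbf{S}$ no longer changes. *)

From mathcomp Require Import all_boot.
Set Implicit Arguments. Unset Strict Implicit. Unset Printing Implicit Defensive.

Section Defs.
Variable V : finType.

(* A mixed graph on V: [dir u v] means u -> v, [bi u v] means u <-> v. *)

Definition adjacent (dir bi : rel V) (u v : V) : bool :=
  [|| dir u v, dir v u | bi u v].

(* u is an ancestor of v (reflexive: every vertex is its own ancestor). *)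
Definition ancestor (dir : rel V) (u v : V) : bool := connect dir u v.

(* Arrowhead at v on the edge between u and v. *)
Definition into (dir bi : rel V) (u v : V) : bool := dir u v || bi u v.

Definition collider (dir bi : rel V) (u v w : V) : bool :=
  into dir bi u v && into dir bi w v.

Fixpoint interior_ok (dir bi : rel V) (Z : {set V}) (u v : V) (s : seq V) : bool :=
  match s with
  | [::] => true
  | w :: s' =>
      (if collider dir bi u v w then [exists z in Z, ancestor dir v z]
       else v \notin Z) && interior_ok dir bi Z v w s'
  end.

Definition m_connected (dir bi : rel V) (Z : {set V}) (a b : V) : Prop :=
  exists p : seq V,
    [&& path (adjacent dir bi) a p, uniq (a :: p), last a p == b &
        match p with
        | [::] => true
        | v :: p' => interior_ok dir bi Z a v p'
        end].

Definition m_separated (dir bi : rel V) (A B Z : {set V}) : Prop :=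
  forall a b, a \in A -> b \in B -> ~ m_connected dir bi Z a b.

Definition is_DMAG (dir bi : rel V) : Prop :=
  (forall u v, bi u v = bi v u) /\ (forall u, ~~ bi u u) /\
  (forall u v, dir u v -> ~~ ancestor dir v u) /\
  (forall u v, bi u v -> ~~ ancestor dir u v) /\
  (forall u v, ~~ (dir u v && bi u v)) /\
  (forall u v, u != v -> ~~ adjacent dir bi u v ->
     exists Z : {set V}, [/\ u \notin Z, v \notin Z &
                            m_separated dir bi [set u] [set v] Z]).

(* [ci A B Z] is the conditional independence statement A _||_ B | Z of P. *)
Definition faithful_to (ci : {set V} -> {set V} -> {set V} -> bool)
  (dir bi : rel V) : Prop :=
  forall A B Z : {set V},
    [disjoint A & B] -> [disjoint A & Z] -> [disjoint B & Z] ->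
    (ci A B Z <-> m_separated dir bi A B Z).

Definition features (T : V) : {set V} := [set~ T].

Definition blanket_cond (ci : {set V} -> {set V} -> {set V} -> bool)
  (T : V) (S : {set V}) : bool :=
  ci (~: (S :|: [set T])) [set T] S.

Definition is_markov_blanket (ci : {set V} -> {set V} -> {set V} -> bool)
  (T : V) (S : {set V}) : Prop :=
  [/\ S \subset features T, blanket_cond ci T S &
      forall S' : {set V}, S' \proper S -> ~~ blanket_cond ci T S'].

Variable ci : {set V} -> {set V} -> {set V} -> bool.
Variable T : V.
(* [fsel R S]: the best-ranked variable among the candidates R (forward);
   [bsel C S]: the variable chosen for removal among candidates C (backward). *)
Variables fsel bsel : {set V} -> {set V} -> V.

Definition indepT (X : V) (S : {set V}) : bool := ci [set X] [set T] S.

(* Forward phase with fuel; each iteration: Early Dropping, then add one. *)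
Fixpoint forward (n : nat) (R S : {set V}) : {set V} :=
  match n with
  | 0 => S
  | n'.+1 =>
      let R' := [set X in R | ~~ indepT X S] in
      if R' == set0 then S
      else let x := fsel R' S in forward n' (R' :\ x) (x |: S)
  end.

Fixpoint backward (n : nat) (S : {set V}) : {set V} :=
  match n with
  | 0 => S
  | n'.+1 =>
      let C := [set X in S | indepT X (S :\ X)] in
      if C == set0 then S else backward n' (S :\ bsel C S)
  end.

(* One Run; the fuel #|V|.+1 is never exhausted (R resp. S shrinks). *)
Definition pfbp_run (S : {set V}) : {set V} :=
  backward #|V|.+1 (forward #|V|.+1 (features T :\: S) S).

Definition pfbp_after (k : nat) : {set V} := iter k pfbp_run set0.

End Defs.

(* By faithfulness, X _||_ T | S means that X is m-separated from T given S.
   Call S an m-blanket if it m-separates T from every other vertex outside S,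
   and irredundant if every X in S is m-connected to T given S \ {X}.
   Every vertex of a collider path to T (all interior vertices colliders) lies
   in every m-blanket Z: by induction from T its interior lies in Z, and a
   collider path with interior in Z is m-connecting given Z.  In an irredundant
   m-blanket S, the path m-connecting X to T given S \ {X} is a collider path,
   since an interior non-collider would lie outside S and be m-connected to T
   given S by the rest of the path.  Hence an irredundant m-blanket is the
   least m-blanket, i.e. the Markov blanket; one exists by discarding redundant
   vertices from V \ {T}.
   A Run never loses a vertex of a collider path whose interior is already
   selected (it stays dependent on T given any larger selection, and so does
   each vertex of the path given the rest), so after |V| Runs the Markov
   blanket is selected.  From a selection containing it, the backward phase
   only removes vertices whose removal leaves an m-blanket and stops at an
   irredundant set, so the Run returns exactly the Markov blanket.  Conversely
   a selection left unchanged by a Run admits no forward addition and no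
   backward removal, so it is an irredundant m-blanket. *)

From Stdlib Require Import Classical.
From mathcomp Require Import all_boot.

Set Implicit Arguments. Unset Strict Implicit. Unset Printing Implicit Defensive.

Lemma notin_features (V : finType) (T : V) (S : {set V}) :
  S \subset features T -> T \notin S.
Proof. by move=> SF; apply/negP => /(subsetP SF); rewrite !inE eqxx. Qed.

Lemma features_neq (V : finType) (T : V) (S : {set V}) X :
  S \subset features T -> X \in S -> X != T.
Proof. by move=> SF /(subsetP SF); rewrite !inE. Qed.

Section MConnection.
Variables (V : finType) (dir bi : rel V) (T : V).
Implicit Types (c : V -> V -> V -> bool) (Z W S B : {set V}) (a u v w x X Y : V) (p s : seq V).

Fixpoint all_triples (c : V -> V -> V -> bool) u v s : bool :=
  if s is w :: s' then c u v w && all_triples c v w s' else true.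

Definition path_to (c : V -> V -> V -> bool) a p : bool :=
  [&& path (adjacent dir bi) a p, uniq (a :: p), last a p == T &
      if p is v :: p' then all_triples c a v p' else true].

Lemma path_to_tail c a v p : path_to c a (v :: p) -> path_to c v p.
Proof.
case/and4P=> /andP[_ pv]; rewrite cons_uniq => /andP[_ uv] lv cv.
rewrite /path_to; apply/and4P; split => //.
by case: p {pv uv lv} cv => // w p /andP[].
Qed.

Lemma path_to_suffix c a p x : path_to c a p -> x \in p -> exists q, path_to c x q.
Proof.
elim: p a => // v p IH a pa; rewrite inE => /orP[/eqP-> | xp].
  by exists p; apply: path_to_tail pa.
exact: IH (path_to_tail pa) xp.
Qed.

Lemma all_triples_sub (c1 c2 : V -> V -> V -> bool) u v s :
  (forall y x z, x \in belast v s -> c1 y x z -> c2 y x z) ->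
  all_triples c1 u v s -> all_triples c2 u v s.
Proof.
elim: s u v => //= w s IH u v sub /andP[c1uvw c1s].
rewrite sub ?mem_head //=; apply: IH c1s => y x z xs.
by apply: sub; rewrite inE xs orbT.
Qed.

Lemma path_to_sub (c1 c2 : V -> V -> V -> bool) a p :
  (forall y x z, x \in behead (belast a p) -> c1 y x z -> c2 y x z) ->
  path_to c1 a p -> path_to c2 a p.
Proof.
move=> sub /and4P[pa ua la ca]; rewrite /path_to pa ua la /=.
by case: p {pa ua la} sub ca => // v p sub; apply: all_triples_sub.
Qed.

Lemma path_to_head c a p : path_to c a p -> a != T -> a \in belast a p.
Proof. by case: p => [/and4P[_ _ /= ->] | v p _ _] //; rewrite mem_head. Qed.

Lemma path_to_head_interior c a p : path_to c a p -> a \notin behead (belast a p).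
Proof.
case: p => // v p /and4P[_]; rewrite cons_uniq => /andP[ap _] _ _.
by apply: contra ap => /mem_belast.
Qed.

Lemma path_to_belast_neq c a p x : path_to c a p -> x \in belast a p -> x != T.
Proof.
case/and4P=> _ + /eqP la _; rewrite lastI la rcons_uniq => /andP[Tp _].
by apply: contraTneq => ->.
Qed.

Definition active Z u v w : bool :=
  if collider dir bi u v w then [exists z in Z, ancestor dir v z] else v \notin Z.

Lemma m_connectedE Z a :
  m_connected dir bi Z a T <-> exists p, path_to (active Z) a p.
Proof.
have okE u v s : interior_ok dir bi Z u v s = all_triples (active Z) u v s.
  by elim: s u v => //= w s IH u v; rewrite IH.
split=> -[p hp]; exists p; case: p hp => // v p.
  by rewrite /path_to -okE.
by rewrite /path_to okE.
Qed.

Definition collider_path := path_to (collider dir bi).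

Definition collides_in Z u v w : bool := (v \in Z) ==> collider dir bi u v w.

Lemma active_collides_in Z W u v w :
  (v \in Z -> v \in W) -> active W u v w -> collides_in Z u v w.
Proof.
rewrite /active /collides_in; case: collider; rewrite ?implybT // => vZW vW.
by apply/implyP => /vZW; rewrite (negbTE vW).
Qed.

Lemma collider_path_m_connected Z a p :
  collider_path a p -> {subset behead (belast a p) <= Z} ->
  m_connected dir bi Z a T.
Proof.
move=> cp sub; apply/m_connectedE; exists p.
apply: path_to_sub cp => y x z /sub xZ col; rewrite /active col.
by apply/existsP; exists x; rewrite xZ /ancestor connect0.
Qed.

Lemma collider_path_m_connected_setD1 W a p x :
  collider_path a p -> x \in belast a p -> {subset belast a p <= W} ->
  m_connected dir bi (W :\ x) x T.
Proof.
elim: p a => // v p IH a cp; rewrite /= inE => /orP[/eqP-> | xp] sub.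
  apply: (collider_path_m_connected cp) => y yp.
  rewrite in_setD1 sub ?inE ?yp ?orbT //.
  by rewrite andbT; apply: contraTneq yp => ->; apply: path_to_head_interior cp.
by apply: IH (path_to_tail cp) xp _ => y yp; apply: sub; rewrite inE yp orbT.
Qed.

Definition m_blanket Z : Prop :=
  forall Y, Y \notin Z -> Y != T -> ~ m_connected dir bi Z Y T.

Definition irredundant S : Prop :=
  forall X, X \in S -> m_connected dir bi (S :\ X) X T.

Lemma m_blanket_features : m_blanket (features T).
Proof. by move=> Y; rewrite !inE negbK => ->. Qed.

Lemma collider_path_sub_m_blanket Z a p :
  m_blanket Z -> collider_path a p -> {subset belast a p <= Z}.
Proof.
move=> bZ; elim: p a => // v p IH a cp.
have sub := IH v (path_to_tail cp).
move=> y; rewrite /= inE => /orP[/eqP-> | /sub //].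
apply/negPn/negP => aZ; apply: (bZ a aZ).
  exact: path_to_belast_neq cp (mem_head _ _).
exact: collider_path_m_connected cp sub.
Qed.

Lemma collides_in_collider_path Z a p :
  m_blanket Z -> path_to (collides_in Z) a p -> collider_path a p.
Proof.
move=> bZ; elim: p a => [|v p IH] a cZ.
  by case/and4P: cZ => *; rewrite /path_to; apply/and4P.
have cv := IH v (path_to_tail cZ).
case/and4P: cZ => pa ua la ca; rewrite /path_to; apply/and4P; split => //.
case: p IH cv pa ua la ca => //= w p _ cv _ _ _ /andP[vZ _].
case/and4P: (cv) => _ _ _ /= ->; rewrite andbT; apply: (implyP vZ).
exact: collider_path_sub_m_blanket bZ cv _ (mem_head _ _).
Qed.

Lemma m_blanket_superset B W : m_blanket B -> B \subset W -> m_blanket W.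
Proof.
move=> bB BW Y YW YT /m_connectedE[p mp].
have cp : collider_path Y p.
  apply: (collides_in_collider_path bB); apply: path_to_sub mp => y x z _.
  exact/active_collides_in/subsetP.
have YB := collider_path_sub_m_blanket bB cp (path_to_head cp YT).
by rewrite (subsetP BW _ YB) in YW.
Qed.

Lemma m_blanketD1 W X :
  m_blanket W -> ~ m_connected dir bi (W :\ X) X T -> m_blanket (W :\ X).
Proof.
move=> bW nX Y; rewrite in_setD1 negb_and negbK => /orP[/eqP-> _ // | YW] YT.
case/m_connectedE=> p mp; have [Xp | Xnp] := boolP (X \in p).
  by have [q mq] := path_to_suffix mp Xp; apply: nX; apply/m_connectedE; exists q.
apply: (bW Y YW YT); apply/m_connectedE; exists p; apply: path_to_sub mp => y x z xi.
have xX : x != X.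
  by case: p xi Xnp => // v p /mem_belast xp; apply: contraNneq => <-.
rewrite /active; case: collider; last by rewrite in_setD1 xX.
by case/existsP=> z' /andP[/setD1P[_ zW] az]; apply/existsP; exists z'; rewrite zW.
Qed.

Lemma irredundant_collider_path S X :
  m_blanket S -> irredundant S -> X \in S -> exists p, collider_path X p.
Proof.
move=> bS irS XS; case/m_connectedE: (irS X XS) => p mp; exists p.
apply: (collides_in_collider_path bS); move: (mp); apply: path_to_sub => y x z xi.
apply: active_collides_in => xS; rewrite in_setD1 xS andbT.
by apply: contraTneq xi => ->; apply: path_to_head_interior mp.
Qed.

Lemma irredundant_sub_m_blanket S Z :
  T \notin S -> m_blanket S -> irredundant S -> m_blanket Z -> S \subset Z.
Proof.
move=> TS bS irS bZ; apply/subsetP => X XS.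
have [p cp] := irredundant_collider_path bS irS XS.
apply: (collider_path_sub_m_blanket bZ cp); apply: path_to_head cp _.
by apply: contraNneq TS => <-.
Qed.

Lemma irredundant_m_blanket_sub Z :
  m_blanket Z -> exists2 B : {set V}, B \subset Z & m_blanket B /\ irredundant B.
Proof.
elim: {Z}_.+1 {-2}Z (ltnSn #|Z|) => // n IH Z Zn bZ.
case: (classic (irredundant Z)) => [irZ | nirZ].
  by exists Z; rewrite ?subxx.
have [X XZ nX] : exists2 X, X \in Z & ~ m_connected dir bi (Z :\ X) X T.
  apply: NNPP => noX; apply: nirZ => X XZ.
  by apply: NNPP => nX; apply: noX; exists X.
have ZXn : #|Z :\ X| < n by move: Zn; rewrite (cardsD1 X) XZ.
have [B BZX hB] := IH (Z :\ X) ZXn (m_blanketD1 bZ nX).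
by exists B => //; apply: subset_trans BZX (subD1set Z X).
Qed.

End MConnection.

Section Faithfulness.
Variables (V : finType) (dir bi : rel V) (T : V).
Variable ci : {set V} -> {set V} -> {set V} -> bool.
Hypothesis faithful : faithful_to ci dir bi.
Implicit Types (Z S M : {set V}) (X Y : V).
Local Notation indep := (indepT ci T).

Lemma indepTE Z Y : T \notin Z -> Y \notin Z -> Y != T ->
  indep Y Z <-> ~ m_connected dir bi Z Y T.
Proof.
move=> TZ YZ YT.
have [sep sepP] : indep Y Z <-> m_separated dir bi [set Y] [set T] Z.
  by apply: faithful; rewrite ?disjoints1 ?in_set1.
split=> [/sep-/(_ Y T (set11 Y) (set11 T)) // | nc].
by apply: sepP => a b /set1P-> /set1P->.
Qed.

Lemma m_connected_dependent Z Y : T \notin Z -> Y \notin Z -> Y != T ->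
  m_connected dir bi Z Y T -> ~~ indep Y Z.
Proof. by move=> TZ YZ YT mc; apply/negP => /(indepTE TZ YZ YT). Qed.

Lemma irredundant_indepT S : T \notin S ->
  (forall X, X \in S -> ~~ indep X (S :\ X)) -> irredundant dir bi T S.
Proof.
move=> TS dep X XS; apply: NNPP => nc; move/negP: (dep X XS); apply.
apply/indepTE => //; first by rewrite in_setD1 (negbTE TS) andbF.
  by rewrite !inE eqxx.
by apply: contraTneq XS => ->.
Qed.

Lemma blanket_condE Z : T \notin Z -> blanket_cond ci T Z <-> m_blanket dir bi T Z.
Proof.
move=> TZ; rewrite /blanket_cond.
have [sep sepP] : ci (~: (Z :|: [set T])) [set T] Z <->
                  m_separated dir bi (~: (Z :|: [set T])) [set T] Z.
  apply: faithful; first by rewrite disjoint_sym disjoints1 !inE eqxx orbT.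
    by rewrite disjoints_subset setCS subsetUl.
  by rewrite disjoints1.
split=> [/sep bZ Y YZ YT | bZ]; first by apply: bZ; rewrite !inE ?negb_or ?YZ.
by apply: sepP => a b; rewrite !inE negb_or => /andP[aZ aT] /eqP->; apply: bZ.
Qed.

Lemma irredundant_m_blanket_markov S :
  S \subset features T -> m_blanket dir bi T S -> irredundant dir bi T S ->
  is_markov_blanket ci T S /\ forall M, is_markov_blanket ci T M -> M = S.
Proof.
move=> SF bS irS; have TS := notin_features SF.
have least M : M \subset features T -> blanket_cond ci T M -> S \subset M.
  move=> MF /(blanket_condE (notin_features MF)).
  exact: irredundant_sub_m_blanket.
have bcS : blanket_cond ci T S by apply/blanket_condE.
split=> [|M [MF bcM minM]].
  split=> // S'; rewrite properE => /andP[S'S SnS']; apply/negP => /least.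
  by rewrite (subset_trans S'S SF) => /(_ isT) SS'; rewrite SS' in SnS'.
apply/eqP; rewrite eq_sym eqEproper least //=.
by apply/negP => /minM; rewrite bcS.
Qed.

End Faithfulness.

Section PFBP.
Variables (V : finType) (dir bi : rel V) (T : V).
Variable ci : {set V} -> {set V} -> {set V} -> bool.
Hypothesis faithful : faithful_to ci dir bi.
Variables fsel bsel : {set V} -> {set V} -> V.
Hypothesis fsel_in : forall R S : {set V}, R != set0 -> fsel R S \in R.
Hypothesis bsel_in : forall C S : {set V}, C != set0 -> bsel C S \in C.
Implicit Types (R S W B : {set V}) (X Y : V) (n k : nat).

Local Notation indep := (indepT ci T).
Local Notation F := (features T).
Local Notation fw := (forward ci T fsel).
Local Notation bw := (backward ci T bsel).
Local Notation forward_phase S := (fw #|V|.+1 (F :\: S) S).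
Local Notation run := (pfbp_run ci T fsel bsel).
Local Notation after := (pfbp_after ci T fsel bsel).

Lemma forward_sub n R S : S \subset fw n R S /\ fw n R S \subset S :|: R.
Proof.
elim: n R S => [|n IH] R S /=; first by rewrite subxx subsetUl.
case: ifPn => [_ | R0]; first by rewrite subxx subsetUl.
set R' := [set X in R | _] in R0 *; set x := fsel R' S.
have R'R : R' \subset R by apply/subsetP => y; rewrite inE => /andP[].
have [h1 h2] := IH (R' :\ x) (x |: S); split; first exact: subset_trans (subsetUr _ _) h1.
apply: (subset_trans h2); rewrite !subUset subsetUl sub1set !inE.
rewrite (subsetP R'R _ (fsel_in S R0)) orbT /=.
exact: subset_trans (subD1set _ _) (subset_trans R'R (subsetUr _ _)).
Qed.

Lemma forward_added n R S : fw n R S :\: S \subset [set X in R | ~~ indep X S].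
Proof.
case: n => [|n] /=; first by rewrite setDv sub0set.
case: ifPn => [_ | R0]; first by rewrite setDv sub0set.
set R' := [set X in R | _] in R0 *; set x := fsel R' S.
have [_ h] := forward_sub n (R' :\ x) (x |: S).
apply/subsetP => y /setDP[/(subsetP h) + yS]; rewrite !inE (negbTE yS) orbF.
by case/orP=> [/eqP-> | /andP[_ //]]; have := fsel_in S R0; rewrite inE.
Qed.

Lemma forward_dropped n R S X : #|R| < n -> X \in R -> X \notin fw n R S ->
  exists2 S' : {set V}, S \subset S' /\ S' \subset fw n R S & indep X S'.
Proof.
elim: n R S => // n IH R S Rn XR XnF.
set R' := [set Y in R | ~~ indep Y S].
have [XR' | XnR'] := boolP (X \in R'); last first.
  exists S; first by rewrite subxx (forward_sub n.+1 R S).1.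
  by move: XnR'; rewrite inE XR negbK.
have R0 : R' != set0 by apply/set0Pn; exists X.
set x := fsel R' S; have xR' : x \in R' := fsel_in S R0.
have fwE : fw n.+1 R S = fw n (R' :\ x) (x |: S) by rewrite /= (negbTE R0).
rewrite fwE in XnF *.
have [h1 _] := forward_sub n (R' :\ x) (x |: S).
have XR'x : X \in R' :\ x.
  rewrite in_setD1 XR' andbT; apply: contraNneq XnF => ->.
  by apply: (subsetP h1); rewrite !inE eqxx.
have R'xn : #|R' :\ x| < n.
  have R'R : R' \subset R by apply/subsetP => y; rewrite inE => /andP[].
  by move: (subset_leq_card R'R); rewrite (cardsD1 x) xR' => /leq_ltn_trans/(_ Rn).
have [S' [xSS' S'F] iS'] := IH _ _ R'xn XR'x XnF.
by exists S' => //; rewrite (subset_trans (subsetUr _ _) xSS').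
Qed.

Lemma backward_ind (P : {set V} -> Prop) n S : P S ->
  (forall W X, W \subset S -> P W -> X \in W -> indep X (W :\ X) -> P (W :\ X)) ->
  P (bw n S).
Proof.
elim: n S => // n IH S PS step /=; case: ifPn => // C0.
set b := bsel _ S; have /setIdP[bS ib] := bsel_in S C0.
apply: IH; first exact: step.
by move=> W X WS; apply: step; apply: subset_trans WS (subD1set S b).
Qed.

Lemma backward_sub n S : bw n S \subset S.
Proof.
apply: (backward_ind (P := fun W => W \subset S)) => // W X WS _ _ _.
exact: subset_trans (subD1set W X) WS.
Qed.

Lemma backward_last_removed n S : bw n S != S ->
  exists2 Y, Y \in S :\: bw n S & indep Y (bw n S).
Proof.
elim: n S => [|n IH] S /=; first by rewrite eqxx.
case: ifPn => [_ | C0]; first by rewrite eqxx.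
set b := bsel _ S; have /setIdP[bS ib] := bsel_in S C0.
have [-> _ | /IH[Y /setDP[/setD1P[_ YS] YnS] iY]] := eqVneq (bw n (S :\ b)) (S :\ b).
  by exists b; rewrite // !inE eqxx bS.
by exists Y; rewrite // inE YS YnS.
Qed.

Lemma backward_dependent n S : #|S| < n ->
  forall X, X \in bw n S -> ~~ indep X (bw n S :\ X).
Proof.
elim: n S => // n IH S Sn /=; case: ifPn => [/eqP C0 X XS | C0].
  by apply: contraT => /negbNE iX; have := in_set0 X; rewrite -C0 inE XS iX.
set b := bsel _ S; have /setIdP[bS _] := bsel_in S C0.
by apply: IH; move: Sn; rewrite (cardsD1 b) bS.
Qed.

Lemma fuel_gt_card (A : {set V}) : #|A| < #|V|.+1.
Proof. by rewrite ltnS max_card. Qed.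

Lemma forward_phase_sub S :
  S \subset F -> S \subset forward_phase S /\ forward_phase S \subset F.
Proof.
move=> SF; have [h1 h2] := forward_sub #|V|.+1 (F :\: S) S.
by split=> //; apply: subset_trans h2 _; rewrite subUset SF subsetDl.
Qed.

Lemma run_features S : S \subset F -> run S \subset F.
Proof. by case/forward_phase_sub=> _; apply: subset_trans (backward_sub _ _). Qed.

Lemma run_collider_path S a p :
  S \subset F -> collider_path dir bi T a p ->
  {subset behead (belast a p) <= S} -> {subset belast a p <= run S}.
Proof.
move=> SF cp sub; have [SSf SfF] := forward_phase_sub SF.
have inSf : {subset belast a p <= forward_phase S}.
  case: p cp sub => // v p cp sub y /predU1P[-> | /sub/(subsetP SSf) //].
  apply/negPn/negP => aSf; have aT := path_to_belast_neq cp (mem_head a _).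
  have aFS : a \in F :\: S by rewrite !inE aT (contra (subsetP SSf a) aSf).
  have [S' [SS' S'Sf] iS'] := forward_dropped (fuel_gt_card _) aFS aSf.
  have S'F := subset_trans S'Sf SfF.
  move: iS'; apply/negP/(m_connected_dependent faithful (notin_features S'F)) => //.
    exact: contra (subsetP S'Sf a) aSf.
  by apply: (collider_path_m_connected cp) => z /sub /(subsetP SS').
apply: (backward_ind (P := fun W => {subset belast a p <= W})) => // W X WSf bW XW iX y yb.
rewrite in_setD1 bW // andbT; apply: contraTneq iX => <-.
have WyF := subset_trans (subset_trans (subD1set W y) WSf) SfF.
apply: (m_connected_dependent faithful (notin_features WyF)).
- by rewrite !inE eqxx.
- exact: path_to_belast_neq cp yb.
- exact: collider_path_m_connected_setD1 cp yb bW.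
Qed.

Lemma after_features k : after k \subset F.
Proof. by elim: k => [|k IH]; [apply: sub0set | apply: run_features]. Qed.

Lemma after_collider_path k a p :
  collider_path dir bi T a p -> size p <= k -> {subset belast a p <= after k}.
Proof.
elim: k a p => [|k IH] a [|v p] cp //= sz y //.
exact: run_collider_path (after_features k) cp (IH v p (path_to_tail cp) sz) y.
Qed.

Lemma run_least B W : B \subset W -> W \subset F ->
  m_blanket dir bi T B -> irredundant dir bi T B -> run W = B.
Proof.
move=> BW WF bB irB; have [WSf SfF] := forward_phase_sub WF.
have least := irredundant_sub_m_blanket (notin_features (subset_trans BW WF)) bB irB.
have BR : B \subset run W.
  apply: (backward_ind (P := fun W' => B \subset W')); first exact: subset_trans BW WSf.
  move=> W' X W'Sf BW' XW' iX; have W'F := subset_trans W'Sf SfF.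
  apply/least/m_blanketD1; first exact: m_blanket_superset bB BW'.
  apply/(indepTE faithful _ _ (features_neq W'F XW')) => //; last by rewrite !inE eqxx.
  exact: notin_features (subset_trans (subD1set W' X) W'F).
have RF := run_features WF.
have irR : irredundant dir bi T (run W).
  apply: (irredundant_indepT faithful (notin_features RF)).
  exact: backward_dependent (fuel_gt_card _).
apply/eqP; rewrite eqEsubset BR andbT.
exact: irredundant_sub_m_blanket (notin_features RF) (m_blanket_superset bB BR) irR bB.
Qed.

Lemma run_fixed S : S \subset F -> run S = S ->
  m_blanket dir bi T S /\ irredundant dir bi T S.
Proof.
move=> SF; rewrite /pfbp_run => runS; have TS := notin_features SF.
have [SSf SfF] := forward_phase_sub SF.
have SfS : forward_phase S = S.
  apply/eqP; apply: contraT => SfnS.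
  have [|Y YD iY] := @backward_last_removed #|V|.+1 (forward_phase S).
    by rewrite runS eq_sym.
  rewrite runS in YD iY.
  by have := subsetP (forward_added _ _ _) Y YD; rewrite inE iY andbF.
split.
  move=> Y YS YT; apply/(indepTE faithful TS YS YT).
  have YFS : Y \in F :\: S by rewrite !inE YS YT.
  have YnSf : Y \notin forward_phase S by rewrite SfS.
  have [S' [SS' S'S] iS'] := forward_dropped (fuel_gt_card _) YFS YnSf.
  by rewrite SfS in S'S; have -> : S = S' by apply/eqP; rewrite eqEsubset SS'.
apply: (irredundant_indepT faithful TS); rewrite -runS.
exact: backward_dependent (fuel_gt_card _).
Qed.

Lemma pfbp_converges : exists k, run (after k) = after k.
Proof.
have [B BF [bB irB]] := irredundant_m_blanket_sub (@m_blanket_features V dir bi T).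
have B_after : B \subset after #|V|.
  apply/subsetP => X XB; have [p cp] := irredundant_collider_path bB irB XB.
  apply: (after_collider_path cp) (path_to_head cp (features_neq BF XB)).
  case/and4P: cp => _ /card_uniqP uXp _ _.
  by apply: ltnW; move: (max_card (mem (X :: p))); rewrite uXp.
have afterB : after #|V|.+1 = B := run_least B_after (after_features _) bB irB.
by exists #|V|.+1; rewrite afterB; apply: run_least.
Qed.

Lemma pfbp_fixpoint_markov_blanket k : run (after k) = after k ->
  is_markov_blanket ci T (after k) /\
  forall M, is_markov_blanket ci T M -> M = after k.
Proof.
move=> fixk; have [bA irA] := run_fixed (after_features k) fixk.
exact: (irredundant_m_blanket_markov faithful (after_features k) bA irA).
Qed.

End PFBP.

Theorem theorem2 (V : finType) (T : V) (dir bi : rel V)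
  (ci : {set V} -> {set V} -> {set V} -> bool)
  (fsel bsel : {set V} -> {set V} -> V)
  (hG : is_DMAG dir bi)
  (hfaith : faithful_to ci dir bi)
  (hfsel : forall R S : {set V}, R != set0 -> fsel R S \in R)
  (hbsel : forall C S : {set V}, C != set0 -> bsel C S \in C) :
  (* with maxRuns = oo the Runs eventually leave S unchanged ... *)
  (exists k, pfbp_run ci T fsel bsel (pfbp_after ci T fsel bsel k)
             = pfbp_after ci T fsel bsel k) /\
  (* ... and whenever they do, the output is the (unique) Markov blanket *)
  (forall k, pfbp_run ci T fsel bsel (pfbp_after ci T fsel bsel k)
             = pfbp_after ci T fsel bsel k ->
   is_markov_blanket ci T (pfbp_after ci T fsel bsel k) /\
   forall M, is_markov_blanket ci T M -> M = pfbp_after ci T fsel bsel k).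
Proof.
split; first exact: (pfbp_converges T hfaith hfsel hbsel).
exact: (pfbp_fixpoint_markov_blanket hfaith hfsel hbsel).
Qed.
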